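(* Assume $X\in\mathbb{R}^p$, $C\ge 0$, $T\ge 0$, and let $P_{(X,C)}$ be any given distribution of $(X,C)$. Let $\hat L(\cdot)$ be a lower prediction bound built from observed data $(X_i,C_i,\widetilde T_i)_{i=1}^n$, $\widetilde T_i=\min(T_i,C_i)$, where $(X_i,C_i,T_i)$ are i.i.d. copies of $(X,C,T)$. If $\hat L$ satisfies \[\mathbb{P}\big(T\ge \hat L(X)\mid X=x\big)\ge 1-\alpha\] uniformly for all joint distributions of $(X,C,T)$ with $(X,C)\sim P_{(X,C)}$, then for all such distributions, \[\mathbb{P}(\hat L(x)=0)\ge 1-\alpha\] at almost all points $x$ (with respect to $P_X$) aside from the atoms of $P_X$.
   Context: In the conditional coverage criterion, the probability is over the data used to build $\hat L$ and over a new unit $(X,C,T)$, independent of the data, conditional on $X=x$. $P_X$ denotes the marginal distribution of $X$ under $P_{(X,C)}$. *)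

From HB Require Import structures.
From mathcomp Require Import all_boot all_order all_algebra.
From mathcomp Require Import all_classical all_reals all_analysis.
From mathcomp Require Import measurable_realfun.
Set Implicit Arguments. Unset Strict Implicit. Unset Printing Implicit Defensive.
Import Order.TTheory GRing.Theory Num.Theory.
Local Open Scope classical_set_scope.
Local Open Scope ring_scope.

Section survival_defs.
Context (R : realType) (p : nat).

(* the covariate space R^p, with its Borel (= product) sigma-algebra *)
Local Notation Xsp := (p.-tuple R).
(* a unit (X, C, T): ((X, C), T) *)
Local Notation Unit := ((p.-tuple R * R) * R)%type.

Definition observe (z : Unit) : Unit := (z.1.1, z.1.2, Num.min z.2 z.1.2).

Definition obs_data d (Omega : measurableType d) (n : nat)
  (Z : option 'I_n -> Omega -> Unit) (w : Omega) : n.-tuple Unit :=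
  [tuple observe (Z (Some i) w) | i < n].

Definition marginal_X (PXC : set (p.-tuple R * R)%type -> \bar R) : set Xsp -> \bar R :=
  pushforward PXC fst.

Definition iid_family (I : finType) (i0 : I) d (Omega : measurableType d)
  (P : probability Omega R) (Z : I -> Omega -> Unit) : Prop :=
  [/\ (forall i, measurable_fun setT (Z i)),
      (forall i (A : set Unit), measurable A -> P (Z i @^-1` A) = P (Z i0 @^-1` A))
    & (forall B : I -> set Unit, (forall i, measurable (B i)) ->
        P (\bigcap_(i in [set: I]) (Z i @^-1` B i)) =
        (\big[*%E/1%E]_(i : I) P (Z i @^-1` B i))%E)].

(* The model: Z None = (X, C, T) is the new unit, Z (Some i), i < n, are the
   data units; all are i.i.d. copies of (X, C, T), where (X, C) ~ P_(X,C)
   and T >= 0 almost surely (the law of T given (X,C) is arbitrary). *)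
Definition survival_model (PXC : probability (p.-tuple R * R)%type R) (n : nat)
  d (Omega : measurableType d) (P : probability Omega R)
  (Z : option 'I_n -> Omega -> Unit) : Prop :=
  [/\ iid_family None P Z,
      (forall A : set (p.-tuple R * R)%type, measurable A ->
         P ((fun w => (Z None w).1) @^-1` A) = PXC A)
    & P [set w | (Z None w).2 < 0] = 0%E].

Definition cond_prob_version d (Omega : measurableType d) (P : probability Omega R)
  (E : set Omega) (Y : Omega -> Xsp) (mu : set Xsp -> \bar R) (g : Xsp -> \bar R) :=
  measurable_fun setT g /\
  forall A : set Xsp, measurable A -> P (E `&` Y @^-1` A) = (\int[mu]_(y in A) g y)%E.

Definition coverage_event (n : nat) d (Omega : measurableType d)
  (Z : option 'I_n -> Omega -> Unit) (Lhat : n.-tuple Unit -> Xsp -> R) : set Omega :=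
  [set w | Lhat (obs_data Z w) (Z None w).1.1 <= (Z None w).2].

Definition cond_coverage (PXC : probability (p.-tuple R * R)%type R) (n : nat)
  (Lhat : n.-tuple Unit -> Xsp -> R) (alpha : R)
  d (Omega : measurableType d) (P : probability Omega R)
  (Z : option 'I_n -> Omega -> Unit) : Prop :=
  exists g : Xsp -> \bar R,
    cond_prob_version P (coverage_event Z Lhat) (fun w => (Z None w).1.1)
      (marginal_X PXC) g /\
    {ae marginal_X PXC, forall x, ((1 - alpha)%R%:E <= g x)%E}.

End survival_defs.

Notation Xsp R p := (p.-tuple R).
Notation Unit R p := ((p.-tuple R * R) * R)%type.

(* Fix a measurable set Q of covariates and change the model by setting
   T := 0 whenever X lies in Q.  The law of (X, C) is unchanged, so the coverage
   guarantee still holds, and on {X in Q} coverage now means Lhat(X) = 0.  As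
   the new unit is independent of the data, this forces, for P_X-almost every
   x in Q, the probability H_Q(x) that Lhat built from the modified data
   vanishes at x to be at least 1 - alpha.  The modified data differ from the
   original ones only if some X_i falls in Q, whence
   P(Lhat(x) = 0) >= H_Q(x) - n P_X(Q).  Taking for Q the cells of finer and
   finer grids containing x (countably many cells in all) and letting their
   P_X-mass shrink to P_X({x}) = 0 at a non-atom x gives the claim. *)

From HB Require Import structures.
From mathcomp Require Import all_boot all_order all_algebra.
From mathcomp Require Import all_classical all_reals all_analysis.
From mathcomp Require Import measurable_realfun.
From mathcomp Require Import lra.
Import Order.TTheory GRing.Theory Num.Theory.
Import numFieldNormedType.Exports.
Local Open Scope classical_set_scope.
Local Open Scope ring_scope.
Set Implicit Arguments. Unset Strict Implicit. Unset Printing Implicit Defensive.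

Lemma big_option (R : Type) (idx : R) (op : Monoid.law idx) (T : finType)
    (F : option T -> R) :
  \big[op/idx]_(i : option T) F i = op (F None) (\big[op/idx]_(i : T) F (Some i)).
Proof.
have -> : index_enum (option T) = None :: map Some (index_enum T).
  by rewrite /index_enum !unlock /= /option_enum; congr (_ :: map _ _); rewrite unlock.
by rewrite big_cons big_map.
Qed.

Section product_probability.
Local Open Scope ereal_scope.
Context d1 d2 (T1 : measurableType d1) (T2 : measurableType d2) (R : realType).
Variables (P1 : probability T1 R) (P2 : probability T2 R).

Lemma product_probability_fst (A : set T1) : measurable A ->
  (P1 \x P2) (fst @^-1` A) = P1 A.
Proof.
by move=> mA; rewrite -setXT product_measure1E// [X in _ * X]probability_setT mule1.
Qed.

Lemma product_probability_snd (A : set T2) : measurable A ->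
  (P1 \x P2) (snd @^-1` A) = P2 A.
Proof.
by move=> mA; rewrite -setTX product_measure1E// [X in X * _]probability_setT mul1e.
Qed.

Lemma product_measure_le_xsection (S : set (T1 * T2)) (B : set T1) (c : R) :
  measurable S -> measurable B -> (0 <= c)%R -> S `<=` B `*` setT ->
  (forall w1, B w1 -> P2 (xsection S w1) <= c%:E) -> (P1 \x P2) S <= c%:E * P1 B.
Proof.
move=> mS mB c0 SB Sc; rewrite -(setIT B) -integral_indic// -ge0_integralZl_EFin//.
apply: ge0_le_integral => //.
- exact: (measurable_fun_xsection P2 mS).
- by apply/measurable_EFinP; apply: measurable_funM => //; exact: measurable_indic.
- move=> w1 _; rewrite indicE; have [/set_mem Bw1|Bw1] := boolP (w1 \in B).
    by rewrite mule1 /=; exact: Sc.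
  rewrite mule0 /= (_ : xsection S w1 = set0) ?measure0//.
  apply/seteqP; split=> // w2; rewrite /xsection /= inE => /SB[] /=.
  by move/mem_set; rewrite (negbTE Bw1).
- by apply/measurable_EFinP; exact: measurable_indic.
Qed.
End product_probability.

Section marginal_probability.
Context (R : realType) (p : nat) (PXC : probability (p.-tuple R * R)%type R).
Local Open Scope ereal_scope.

(* discharges the measurability side condition of the pushforward measure *)
Let mfst : measurable_fun [set: (p.-tuple R * R)%type] fst := measurable_fst.

Let marginal_X0 : marginal_X PXC set0 = 0.
Proof. exact: (measure0 (pushforward PXC fst)). Qed.

Let marginal_X_ge0 A : 0 <= marginal_X PXC A.
Proof. exact: measure_ge0. Qed.

Let marginal_X_sigma_additive : semi_sigma_additive (marginal_X PXC).
Proof. exact: (@measure_semi_sigma_additive _ _ _ (pushforward PXC fst)). Qed.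

HB.instance Definition _ := isMeasure.Build _ _ _ (marginal_X PXC)
  marginal_X0 marginal_X_ge0 marginal_X_sigma_additive.

Let marginal_X_setT : marginal_X PXC setT = 1.
Proof. by rewrite /marginal_X /pushforward preimage_setT probability_setT. Qed.

HB.instance Definition _ :=
  Measure_isProbability.Build _ _ _ (marginal_X PXC) marginal_X_setT.

End marginal_probability.

Section observations.
Context (R : realType) (p : nat).

Lemma measurable_observe : measurable_fun setT (@observe R p).
Proof.
apply: measurable_fun_pair; first apply: measurable_fun_pair.
- exact: measurableT_comp measurable_fst measurable_fst.
- exact: measurableT_comp measurable_snd measurable_fst.
- by apply: measurable_minr => //; exact: measurableT_comp measurable_snd measurable_fst.
Qed.

Lemma measurable_obs_data n d (Omega : measurableType d)
    (Z : option 'I_n -> Omega -> Unit R p) :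
  (forall i, measurable_fun setT (Z (Some i))) -> measurable_fun setT (obs_data Z).
Proof.
move=> mZ; apply/measurable_fun_tnthP => i.
have -> : (@tnth n _)^~ i \o obs_data Z = @observe R p \o Z (Some i).
  by apply/funext => w /=; rewrite tnth_mktuple.
exact: measurableT_comp measurable_observe (mZ i).
Qed.

End observations.

Section iid_families.
Context (R : realType) (p : nat) d (Omega : measurableType d) (P : probability Omega R).

Lemma iid_family_comp (I : finType) (i0 : I) (f : Unit R p -> Unit R p)
    (Z : I -> Omega -> Unit R p) :
  measurable_fun setT f -> iid_family i0 P Z -> iid_family i0 P (fun i => f \o Z i).
Proof.
move=> mf [mZ idZ indZ].
have mpre A : measurable A -> measurable (f @^-1` A).
  by move=> mA; rewrite -[X in measurable X]setTI; exact: mf.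
split=> [i|i A mA|B mB]; first exact: measurableT_comp mf (mZ i).
- exact: idZ _ _ (mpre _ mA).
- exact: indZ (fun i => f @^-1` B i) (fun i => mpre _ (mB i)).
Qed.

(* The new unit lives on the first factor and the data on the second, so that
   conditioning on the new unit becomes taking sections of a product set. *)
Definition split_family n (Z : option 'I_n -> Omega -> Unit R p) :
    option 'I_n -> Omega * Omega -> Unit R p :=
  fun o w => if o is Some i then Z (Some i) w.2 else Z None w.1.

Lemma iid_family_split n (Z : option 'I_n -> Omega -> Unit R p) :
  iid_family None P Z -> iid_family None (P \x P)%E (split_family Z).
Proof.
move=> [mZ idZ indZ].
have mpre o A : measurable A -> measurable (Z o @^-1` A).
  by move=> mA; rewrite -[X in measurable X]setTI; exact: mZ.
have splitN A : measurable A ->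
    (P \x P)%E (split_family Z None @^-1` A) = P (Z None @^-1` A).
  by move=> mA; exact: (product_probability_fst P P (mpre None A mA)).
have splitS i A : measurable A ->
    (P \x P)%E (split_family Z (Some i) @^-1` A) = P (Z (Some i) @^-1` A).
  by move=> mA; exact: (product_probability_snd P P (mpre (Some i) A mA)).
split=> [[i|]|o A mA|B mB].
- exact: measurableT_comp (mZ _) measurable_snd.
- exact: measurableT_comp (mZ _) measurable_fst.
- case: o => [i|] //.
  exact: etrans (splitS i A mA) (etrans (idZ _ _ mA) (esym (splitN A mA))).
pose B' o := if o is Some i then B (Some i) else setT.
have -> : \bigcap_(o in setT) split_family Z o @^-1` B o =
    (Z None @^-1` B None) `*` \bigcap_(o in setT) Z o @^-1` B' o.
  apply/seteqP; split=> -[w1 w2] /=.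
  - by move=> h; split=> [|[i|] _ //]; [exact: (h None)|exact: (h (Some i))].
  - by move=> [h1 h2] [i|] _ //; exact: (h2 (Some i)).
have mB' : measurable (\bigcap_(o in setT) Z o @^-1` B' o).
  apply: fin_bigcap_measurable => [|[i|] _]; first exact: finite_finset.
  - exact: mpre _ _ (mB _).
  - exact: mpre _ _ measurableT.
transitivity (P (Z None @^-1` B None) * P (\bigcap_(o in setT) Z o @^-1` B' o))%E.
  exact: product_measure1E (mpre _ _ (mB None)) mB'.
rewrite indZ; last by rewrite /B' => -[].
rewrite !big_option /= preimage_setT probability_setT mul1e.
congr (_ * _)%E; first exact: esym (splitN _ (mB None)).
by apply: eq_bigr => i _; exact: esym (splitS _ _ (mB _)).
Qed.
End iid_families.

Section zero_time.
Context (R : realType) (p : nat).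

Definition zero_time_on (Q : set (p.-tuple R)) (z : Unit R p) : Unit R p :=
  (z.1, \1_(~` Q) z.1.1 * z.2).

Lemma measurable_zero_time_on Q : measurable Q -> measurable_fun setT (zero_time_on Q).
Proof.
move=> mQ; apply: measurable_fun_pair => //.
apply: (measurable_funM (f := fun z : Unit R p => \1_(~` Q) z.1.1)) => //.
apply: (measurableT_comp (f := (\1_(~` Q) : p.-tuple R -> R))).
  exact/measurable_indic/measurableC.
exact: measurableT_comp measurable_fst measurable_fst.
Qed.

Lemma zero_time_on_notin Q z : ~ Q z.1.1 -> zero_time_on Q z = z.
Proof.
by move=> Qz; rewrite /zero_time_on indicE in_setC memNset// mul1r -surjective_pairing.
Qed.

Lemma zero_time_on_lt0 Q z : (zero_time_on Q z).2 < 0 -> z.2 < 0.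
Proof. by rewrite /= indicE; case: (_ \in _); rewrite ?mul1r ?mul0r ?ltxx. Qed.

Definition zeroed_units n d (Omega : measurableType d) (Q : set (p.-tuple R))
    (Z : option 'I_n -> Omega -> Unit R p) : option 'I_n -> Omega -> Unit R p :=
  fun o => zero_time_on Q \o Z o.

Lemma survival_model_zero_time (PXC : probability (p.-tuple R * R)%type R) n
    d (Omega : measurableType d) (P : probability Omega R)
    (Z : option 'I_n -> Omega -> Unit R p) Q :
  measurable Q -> survival_model PXC P Z ->
  survival_model PXC (P \x P)%E (split_family (zeroed_units Q Z)).
Proof.
move=> mQ [iidZ lawXC T_ge0]; have [mZ _ _] := iidZ.
have mZ1 A : measurable A -> measurable ((fun w => (Z None w).1) @^-1` A).
  move=> mA; rewrite -[X in measurable X]setTI.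
  exact: (measurableT_comp measurable_fst (mZ None)) measurableT _ mA.
have mT_lt0 d' (T : measurableType d') (f : T -> Unit R p) :
    measurable_fun setT f -> measurable [set w | (f w).2 < 0].
  move=> mf; rewrite -[X in measurable X]setTI.
  have mlt := @measurable_fun_ltr _ _ _ setT (fun w => (f w).2) (fun=> 0)
    (measurableT_comp measurable_snd mf) (measurable_cst _).
  by apply: (mlt measurableT [set true]).
split.
- exact/iid_family_split/(iid_family_comp (measurable_zero_time_on mQ) iidZ).
- move=> A mA; rewrite -lawXC//.
  exact: (product_probability_fst P P (mZ1 A mA)).
- apply/eqP; rewrite -measure_le0 -T_ge0.
  rewrite -(product_probability_fst P P (mT_lt0 _ _ _ (mZ None))).
  apply: le_measure; rewrite ?inE//.
  - apply: mT_lt0; apply: measurableT_comp (measurable_zero_time_on mQ) _.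
    exact: measurableT_comp (mZ None) measurable_fst.
  - rewrite -[X in measurable X]setTI.
    exact: measurable_fst measurableT _ (mT_lt0 _ _ _ (mZ None)).
  - by move=> w /zero_time_on_lt0.
Qed.

End zero_time.

Section grid.
Context (R : realType) (p : nat).

Definition grid_index (k : nat) (x : p.-tuple R) : p.-tuple int :=
  [tuple Num.floor (tnth x i * k.+1%:R) | i < p].

Definition grid_cell (k : nat) (j : p.-tuple int) : set (p.-tuple R) :=
  [set y | forall i, Num.floor (tnth y i * k.+1%:R) = tnth j i].

Definition box (k : nat) (x : p.-tuple R) : set (p.-tuple R) :=
  [set y | forall i, ball (tnth x i) k.+1%:R^-1 (tnth y i)].

Lemma measurable_coordwise (S : 'I_p -> set R) : (forall i, measurable (S i)) ->
  measurable [set y : p.-tuple R | forall i, S i (tnth y i)].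
Proof.
move=> mS; have -> : [set y : p.-tuple R | forall i, S i (tnth y i)] =
    \bigcap_(i in setT) ((@tnth p R)^~ i @^-1` S i).
  by apply/seteqP; split=> y /= yS i; [move=> _|]; exact: yS.
apply: fin_bigcap_measurable => [|i _]; first exact: finite_finset.
by rewrite -[X in measurable X]setTI; exact: measurable_tnth.
Qed.

Lemma measurable_grid_cell k j : measurable (grid_cell k j).
Proof.
apply: (measurable_coordwise
  (S := fun i => [set t : R | Num.floor (t * k.+1%:R) = tnth j i])) => i.
have -> : [set t : R | Num.floor (t * k.+1%:R) = tnth j i] =
    setT `&` ((fun t : R => t * k.+1%:R) @^-1`
                [set` `[(tnth j i)%:~R, (tnth j i + 1)%:~R[]).
  apply/seteqP; split=> t /=.
  - by move=> tj; split=> //; rewrite in_itv /= -floor_eq tj.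
  - by case=> _; rewrite in_itv /= -floor_eq => /eqP.
by apply: measurable_funM.
Qed.

Lemma measurable_box k x : measurable (box k x).
Proof.
by apply: (measurable_coordwise (S := fun i => ball (tnth x i) _)) => i;
  exact: measurable_ball.
Qed.

Lemma grid_cell_index k x : grid_cell k (grid_index k x) x.
Proof. by move=> i; rewrite tnth_mktuple. Qed.

Lemma grid_cell_sub_box k x : grid_cell k (grid_index k x) `<=` box k x.
Proof.
move=> y yx i; rewrite -ball_normE /ball_ /= -[_^-1]div1r ltr_pdivlMr//.
rewrite -[_%:R]ger0_norm// -normrM mulrBl ltr_norml.
have := floor_itv (tnth y i * k.+1%:R); rewrite yx tnth_mktuple.
have := floor_itv (tnth x i * k.+1%:R); rewrite intrD.
by move: (Num.floor _)%:~R => m /andP[? ?] /andP[? ?]; apply/andP; split; lra.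
Qed.

Lemma box_nonincreasing x : nonincreasing_seq (box ^~ x).
Proof.
move=> m k mk; apply/subsetPset => y yx i; apply: le_ball (yx i).
by rewrite lef_pV2 ?posrE// ler_nat ltnS.
Qed.

Lemma bigcap_box x : \bigcap_k box k x = [set x].
Proof.
apply/seteqP; split=> [y yx|_ -> k _ i]; last exact: ballxx.
apply: eq_from_tnth => i; apply/eqP/negPn/negP; rewrite eq_sym -subr_eq0 -normr_gt0.
move=> xy; have [N _ /(_ N (leqnn _))] := near_infty_natSinv_lt (PosNum xy).
by have := yx N I i; rewrite -ball_normE /ball_ /= => /lt_trans/[apply]; rewrite ltxx.
Qed.

End grid.

Section Lhat_measurability.
Context (R : realType) (p n : nat) (Lhat : n.-tuple (Unit R p) -> p.-tuple R -> R).
Hypothesis mLhat :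
  measurable_fun setT (fun u : n.-tuple (Unit R p) * p.-tuple R => Lhat u.1 u.2).

Lemma measurable_Lhat_eq0 d (T : measurableType d) (D : T -> n.-tuple (Unit R p))
    (X : T -> p.-tuple R) :
  measurable_fun setT D -> measurable_fun setT X ->
  measurable [set w | Lhat (D w) (X w) = 0].
Proof.
move=> mD mX; have mLX : measurable_fun setT (fun w => Lhat (D w) (X w)).
  exact: measurableT_comp mLhat (measurable_fun_pair mD mX).
by rewrite -[X in measurable X]setTI; exact: mLX measurableT _ (measurable_set1 0).
Qed.

Lemma measurable_prob_Lhat_eq0 d (T : measurableType d) (Pr : probability T R)
    (D : T -> n.-tuple (Unit R p)) :
  measurable_fun setT D -> measurable_fun setT (fun x => Pr [set w | Lhat (D w) x = 0]).
Proof.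
move=> mD; have mD1 : measurable_fun setT (D \o fst : T * p.-tuple R -> _).
  exact: measurableT_comp mD measurable_fst.
have := measurable_fun_ysection Pr (measurable_Lhat_eq0 mD1 measurable_snd).
congr measurable_fun; apply/funext => x /=; congr (Pr _).
by apply/seteqP; split=> w /=; rewrite /ysection /= inE.
Qed.

End Lhat_measurability.

Section conditional_probability.
Local Open Scope ereal_scope.
Context (R : realType) (p : nat) d (Omega : measurableType d) (P : probability Omega R).
Variables (E : set Omega) (Y : Omega -> p.-tuple R).
Variables (mu : {measure set (p.-tuple R) -> \bar R}) (g : p.-tuple R -> \bar R).

Lemma cond_prob_version_ge (a : R) (A : set (p.-tuple R)) :
  (0 <= a)%R -> cond_prob_version P E Y mu g -> {ae mu, forall x, a%:E <= g x} ->
  measurable A -> a%:E * mu A <= P (E `&` Y @^-1` (A `&` [set x | 0 <= g x])).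
Proof.
move=> a0 [mg Eg] ag mA; set A' := A `&` _.
have mA' : measurable A'.
  by apply: measurableI => //; rewrite -[X in measurable X]setTI; exact: measurable_lee.
have [N [mN N0 gN]] := ag.
have muA : mu A <= mu A'.
  have AA'N : A `<=` A' `|` N.
    move=> x Ax; have [g0|g0] := boolP (0 <= g x); first by left.
    by right; apply: gN => /= agx; rewrite (le_trans (lee_tofin a0) agx) in g0.
  apply: le_trans (le_measure _ _ _ AA'N) _; rewrite ?inE//; first exact: measurableU.
  apply: le_trans (measureU2 _ mA' mN) _.
  by rewrite -[leRHS]adde0 leeD2l// le_eqVlt; apply/orP; left; apply/eqP; exact: N0.
rewrite Eg//; apply: le_trans (lee_wpmul2l (lee_tofin a0) muA) _.
rewrite -integral_cst//; apply: ae_ge0_le_integral => //.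
- by move=> x [].
- exact: measurable_funTS.
- by apply: filterS ag => x + _; apply.
Qed.

End conditional_probability.

Section zero_prediction.
Context (R : realType) (p n : nat) (alpha : R).
Context (PXC : probability (p.-tuple R * R)%type R).
Context (Lhat : n.-tuple (Unit R p) -> p.-tuple R -> R).
Hypothesis mLhat :
  measurable_fun setT (fun u : n.-tuple (Unit R p) * p.-tuple R => Lhat u.1 u.2).
Hypothesis Lhat_ge0 : forall D x, 0 <= Lhat D x.
Hypothesis alpha01 : 0 < alpha < 1.
Hypothesis coverage : forall d' (T : measurableType d') (Pr : probability T R)
  (Y : option 'I_n -> T -> Unit R p),
  survival_model PXC Pr Y -> cond_coverage PXC Lhat alpha Pr Y.
Context d (Omega : measurableType d) (P : probability Omega R).
Context (Z : option 'I_n -> Omega -> Unit R p).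
Hypothesis model : survival_model PXC P Z.

Local Notation mu := (marginal_X PXC).
Local Notation zeroed Q := (zeroed_units Q Z).

Let mZ : forall o, measurable_fun setT (Z o).
Proof. by have [[]] := model. Qed.

Let X0 (w : Omega) : p.-tuple R := (Z None w).1.1.

Let mX0 : measurable_fun setT X0.
Proof.
exact: measurableT_comp measurable_fst (measurableT_comp measurable_fst (mZ None)).
Qed.

Lemma marginal_XE A : measurable A -> mu A = P (X0 @^-1` A).
Proof.
move=> mA; have [_ lawXC _] := model; rewrite /marginal_X /pushforward -lawXC//.
by rewrite -[X in measurable X]setTI; exact: measurable_fst.
Qed.

Definition prob_Lhat_eq0 (D : Omega -> n.-tuple (Unit R p)) (x : p.-tuple R) :=
  P [set w | Lhat (D w) x = 0].

Lemma measurable_zeroed_data Q : measurable Q ->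
  measurable_fun setT (obs_data (zeroed Q)).
Proof.
move=> mQ; apply: measurable_obs_data => i.
exact: measurableT_comp (measurable_zero_time_on mQ) (mZ _).
Qed.

Lemma coverage_zeroed_le Q A c : measurable Q -> measurable A -> (0 <= c)%R ->
    A `<=` Q `&` [set x | prob_Lhat_eq0 (obs_data (zeroed Q)) x <= c%:E]%E ->
  ((P \x P) (coverage_event (split_family (zeroed Q)) Lhat `&`
     (fun w => (split_family (zeroed Q) None w).1.1) @^-1` A) <= c%:E * mu A)%E.
Proof.
move=> mQ mA c0 AQ; set D := obs_data (zeroed Q).
have -> : coverage_event (split_family (zeroed Q)) Lhat `&`
    (fun w => (split_family (zeroed Q) None w).1.1) @^-1` A =
    [set w | A (X0 w.1) /\ Lhat (D w.2) (X0 w.1) = 0].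
  apply/seteqP; split=> -[w1 w2] /=; rewrite /coverage_event /= indicE in_setC.
  - move=> [Lle /[dup] /AQ[Qw1 _] Aw1]; split=> //; apply/eqP.
    by rewrite eq_le Lhat_ge0 andbT; move: Lle; rewrite (mem_set Qw1) mul0r.
  - by move=> [/[dup] /AQ[Qw1 _] Aw1 ->]; rewrite (mem_set Qw1) mul0r.
rewrite marginal_XE//; apply: product_measure_le_xsection => //.
- apply: measurableI.
    rewrite -[X in measurable X]setTI.
    exact: (measurableT_comp mX0 measurable_fst) measurableT _ mA.
  apply: (measurable_Lhat_eq0 mLhat (D := D \o snd) (X := X0 \o fst)).
  + exact: measurableT_comp (measurable_zeroed_data mQ) measurable_snd.
  + exact: measurableT_comp mX0 measurable_fst.
- by rewrite -[X in measurable X]setTI; exact: mX0.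
- by move=> [w1 w2] [].
- move=> w1 Aw1; have [_ /= Dc] := AQ _ Aw1; apply: le_trans Dc.
  suff -> : xsection [set w | A (X0 w.1) /\ Lhat (D w.2) (X0 w.1) = 0] w1 =
      [set w2 | Lhat (D w2) (X0 w1) = 0] by [].
  by apply/seteqP; split=> w2; rewrite /xsection /= inE /=; [case|].
Qed.

Lemma zeroed_prob_lt_negligible Q c : measurable Q -> c < 1 - alpha ->
  mu (Q `&` [set x | prob_Lhat_eq0 (obs_data (zeroed Q)) x <= c%:E]%E) = 0%E.
Proof.
move=> mQ ca; set H := prob_Lhat_eq0 _; set A := Q `&` _.
have [c0|c0] := ltP c 0.
  rewrite (_ : A = set0) ?measure0//; apply/seteqP; split=> x // [_ /= Hc].
  by have := le_trans (measure_ge0 P _) Hc; rewrite lee_fin leNgt c0.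
have mA : measurable A.
  apply: measurableI => //; rewrite -[X in measurable X]setTI; apply: measurable_lee => //.
  exact: (measurable_prob_Lhat_eq0 mLhat P (measurable_zeroed_data mQ)).
have [g [gv gae]] := coverage (survival_model_zero_time mQ model).
have a0 : 0 <= 1 - alpha by rewrite subr_ge0; case/andP: alpha01 => _ /ltW.
have mA' : measurable (A `&` [set x | 0 <= g x]%E).
  apply: measurableI => //; rewrite -[X in measurable X]setTI.
  by apply: measurable_lee => //; case: gv.
have muA' : (mu (A `&` [set x | 0 <= g x]%E) <= mu A)%E.
  by apply: le_measure; rewrite ?inE//; exact: subIsetl.
have := le_trans (cond_prob_version_ge a0 gv gae mA)
  (le_trans (coverage_zeroed_le mQ mA' c0 (fun x Ax => Ax.1))
            (lee_wpmul2l (lee_tofin c0) muA')).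
have [->//|muA0] := eqVneq (mu A) 0%E.
rewrite lee_pmul2r ?lee_fin ?fin_num_measure//; first by rewrite leNgt ca.
by rewrite lt0e muA0 measure_ge0.
Qed.

Lemma zeroed_prob_le Q x : measurable Q ->
  (prob_Lhat_eq0 (obs_data (zeroed Q)) x <=
   prob_Lhat_eq0 (obs_data Z) x + mu Q *+ n)%E.
Proof.
move=> mQ; have [[_ idZ _] _ _] := model.
pose B := [set z : Unit R p | Q z.1.1].
have mB : measurable B.
  rewrite -[X in measurable X]setTI.
  exact: (measurableT_comp measurable_fst measurable_fst) measurableT _ mQ.
pose F k := if insub k is Some i then Z (Some i) @^-1` B else set0.
have mF k : measurable (F k).
  by rewrite /F; case: insub => // i; rewrite -[X in measurable X]setTI; exact: mZ.
have mLx (D : Omega -> n.-tuple (Unit R p)) : measurable_fun setT D ->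
    measurable [set w | Lhat (D w) x = 0].
  by move=> mD; exact: (measurable_Lhat_eq0 mLhat (X := cst x) mD (measurable_cst _)).
have mD : measurable_fun setT (obs_data Z) by exact: measurable_obs_data.
have sub : [set w | Lhat (obs_data (zeroed Q) w) x = 0] `<=`
    [set w | Lhat (obs_data Z w) x = 0] `|` \big[setU/set0]_(k < n) F k.
  move=> w Lw; have [[i Qi]|noQ] := pselect (exists i : 'I_n, B (Z (Some i) w)).
    by right; rewrite -bigcup_mkord; exists i => //=; rewrite /F valK.
  left; rewrite /= -Lw; congr Lhat; apply: eq_from_tnth => i; rewrite !tnth_mktuple /=.
  by rewrite /zeroed_units /= zero_time_on_notin// => Qi; apply: noQ; exists i.
apply: le_trans (le_measure _ _ _ sub) _; rewrite ?inE.
- exact: mLx (measurable_zeroed_data mQ).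
- by apply: measurableU; [exact: mLx|exact: bigsetU_measurable].
apply: le_trans (measureU2 _ (mLx _ mD) (bigsetU_measurable _ _)) _ => //.
rewrite leeD2l// (le_trans (le_mu_bigsetU _ _))//.
rewrite (eq_bigr (fun=> mu Q)) ?sumr_const ?card_ord// => i _.
by rewrite /F valK; exact: etrans (idZ _ _ mB) (esym (marginal_XE mQ)).
Qed.

Lemma ae_grid_zeroed_prob :
  {ae mu, forall x k, ((1 - alpha - k.+1%:R^-1)%:E <
     prob_Lhat_eq0 (obs_data (zeroed (grid_cell k (grid_index k x)))) x)%E}.
Proof.
pose good m x := forall k j, unpickle m = Some (k, j) -> grid_cell k j x ->
  ((1 - alpha - k.+1%:R^-1)%:E <
     prob_Lhat_eq0 (obs_data (zeroed (grid_cell k j))) x)%E.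
have goodP m : {ae mu, forall x, good m x}.
  rewrite /good; case: (unpickle m) => [[k j]|]; last by apply: aeW.
  exists (grid_cell k j `&` [set x | prob_Lhat_eq0 (obs_data (zeroed (grid_cell k j))) x
                                     <= (1 - alpha - k.+1%:R^-1)%:E]%E); split.
  - apply: measurableI; first exact: measurable_grid_cell.
    rewrite -[X in measurable X]setTI; apply: measurable_lee => //.
    have mC := measurable_zeroed_data (measurable_grid_cell k j).
    exact: (measurable_prob_Lhat_eq0 mLhat P mC).
  - apply: zeroed_prob_lt_negligible; first exact: measurable_grid_cell.
    by rewrite ltrBlDr ltrDl invr_gt0.
  - move=> x /= xbad; apply: contrapT => xN; apply: xbad => _ _ [<- <-] xkj.
    by rewrite ltNge; apply/negP => Hc; apply: xN.
apply: filterS (ae_foralln goodP) => x xgood k.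
by apply: (xgood (pickle (k, grid_index k x))); [rewrite pickleK|exact: grid_cell_index].
Qed.

Lemma zero_prediction_ae :
  {ae mu, forall x, mu [set x] = 0%E ->
     ((1 - alpha)%:E <= P [set w | Lhat (obs_data Z w) x = 0%R])%E}.
Proof.
apply: filterS ae_grid_zeroed_prob => x x_grid x0.
have finP (A : set Omega) : measurable A -> P A \is a fin_num.
  by move=> ?; exact: fin_num_measure.
have finmu (A : set (p.-tuple R)) : measurable A -> mu A \is a fin_num.
  by move=> ?; exact: fin_num_measure.
have mG : measurable [set w | Lhat (obs_data Z w) x = 0].
  exact: (measurable_Lhat_eq0 mLhat (X := cst x) (measurable_obs_data _) (measurable_cst _)).
have box0 : (fun k => fine (mu (box k x))) @ \oo --> 0.
  apply: fine_cvg; have -> : 0%:E = mu (\bigcap_k box k x) by rewrite bigcap_box x0.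
  apply: nonincreasing_cvg_mu.
  - by rewrite -ge0_fin_numE// finmu//; exact: measurable_box.
  - by move=> k; exact: measurable_box.
  - by apply: bigcapT_measurable => k; exact: measurable_box.
  - exact: box_nonincreasing.
have bound k : 1 - alpha - k.+1%:R^-1 <=
    fine (prob_Lhat_eq0 (obs_data Z) x) + fine (mu (box k x)) *+ n.
  have mC := @measurable_grid_cell R p k (grid_index k x).
  have := ltW (lt_le_trans (x_grid k) (zeroed_prob_le x mC)).
  rewrite /prob_Lhat_eq0 -(fineK (finP _ mG)) -(fineK (finmu _ mC)) -EFin_natmul -EFinD.
  rewrite lee_fin => /le_trans; apply; rewrite lerD2l lerMn2r fine_le ?finmu ?orbT//.
    exact: measurable_box.
  by apply: le_measure; rewrite ?inE; [|exact: measurable_box|exact: grid_cell_sub_box].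
rewrite /prob_Lhat_eq0 -(fineK (finP _ mG)) lee_fin.
apply: (@ler_cvg_to _ \oo _ _ (fun k => 1 - alpha - k.+1%:R^-1)
  (fun k => fine (prob_Lhat_eq0 (obs_data Z) x) + fine (mu (box k x)) *+ n)).
- by rewrite -[X in _ --> X]subr0; exact: cvgB (cvg_cst _) cvg_harmonic.
- have nbox0 : (fun k => fine (mu (box k x)) *+ n) @ \oo --> 0.
    by rewrite -(mul0rn _ n); exact: cvgMn.
  by rewrite -[X in _ --> X]addr0; exact: cvgD (cvg_cst _) nbox0.
- exact: nearW bound.
Qed.

End zero_prediction.

Unset Implicit Arguments.

Theorem theorem5 (R : realType) (p n : nat) (alpha : R)
  (PXC : probability (p.-tuple R * R)%type R)
  (Lhat : n.-tuple (Unit R p) -> Xsp R p -> R) :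
  0 < alpha < 1 ->
  PXC [set z | z.2 < 0] = 0%E ->
  measurable_fun setT (fun u : n.-tuple (Unit R p) * Xsp R p => Lhat u.1 u.2) ->
  (forall D x, 0 <= Lhat D x) ->
  (forall (d : measure_display) (Omega : measurableType d) (P : probability Omega R)
      (Z : option 'I_n -> Omega -> Unit R p),
      survival_model PXC P Z -> cond_coverage PXC Lhat alpha P Z) ->
  forall (d : measure_display) (Omega : measurableType d) (P : probability Omega R)
      (Z : option 'I_n -> Omega -> Unit R p),
    survival_model PXC P Z ->
    {ae marginal_X PXC, forall x : Xsp R p,
       marginal_X PXC [set x] = 0%E ->
       ((1 - alpha)%R%:E <= P [set w | Lhat (obs_data Z w) x = 0%R])%E}.
Proof.
move=> alpha01 _ mLhat Lhat_ge0 coverage d Omega P Z model.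
exact: (zero_prediction_ae mLhat Lhat_ge0 alpha01 coverage model).
Qed.
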